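(* Let $\mu>0$, let $V^{*}_{\mu}$ be the fixed point of $\mathcal{B}_{\mu}$ and $V^{*}$ the fixed point of $\mathcal{B}$. Then $$\|V^{*}_{\mu}-V^{*}\|_{\infty}\le\frac{\mu\cdot\max\{|1-\mathbf{C}|,1\}}{1-\gamma}.$$
   Context: Markov decision process with state space $\mathcal{S}$, action space $\mathcal{A}\subseteq\mathbb{R}$, transition kernel $\mathbf{P}$, bounded reward $R(s',s,a)$, discount $\gamma\in[0,1)$. Standing assumption: all policies are conditional densities on $\mathcal{A}$ (w.r.t. Lebesgue measure) bounded by the constant $\mathbf{C}$; this class is $\Pi_{\mathbf{C}}$. For bounded $V$, $Q_V(s,a)=\mathbb{E}_{S'\sim\mathbf{P}(\cdot\mid s,a)}[R(S',s,a)+\gamma V(S')]$, $\mathcal{B}V(s)=\sup_{\pi\in\Pi_{\mathbf{C}}}\int_{\mathcal{A}}Q_V(s,a)\pi(a\mid s)\,da$, and $\mathcal{B}_{\mu}V(s)=\sup_{\pi\in\Pi_{\mathbf{C}}}\int_{\mathcal{A}}[Q_V(s,a)\pi(a\mid s)+\mu(\pi(a\mid s)-\pi(a\mid s)^2)]\,da$. *)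

From HB Require Import structures.
From mathcomp Require Import all_boot all_order all_algebra.
From mathcomp Require Import all_classical all_reals all_analysis.
Set Implicit Arguments. Unset Strict Implicit. Unset Printing Implicit Defensive.
Import Order.TTheory GRing.Theory Num.Theory.
Import numFieldNormedType.Exports.
Local Open Scope classical_set_scope.
Local Open Scope ring_scope.

Section MDP.
Context {R : realType} {d : measure_display} {S : measurableType d}.

Notation leb := (@lebesgue_measure R).

Definition Qfun (P : R.-pker (S * R)%type ~> S) (Rew : S -> S -> R -> R)
  (gamma : R) (V : S -> R) (s : S) (a : R) : R :=
  Rintegral (P (s, a)) setT (fun s' => Rew s' s a + gamma * V s').

Definition density_bounded (A : set R) (C : R) (p : R -> R) : Prop :=
  [/\ measurable_fun A p,
      (forall a, A a -> 0 <= p a <= C) &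
      (\int[leb]_(a in A) (p a)%:E = 1)%E].

Definition PiC (A : set R) (C : R) : set (S -> R -> R) :=
  [set pi | forall s, density_bounded A C (pi s)].

Definition Bop (A : set R) (C : R) (P : R.-pker (S * R)%type ~> S)
  (Rew : S -> S -> R -> R) (gamma : R) (V : S -> R) (s : S) : \bar R :=
  ereal_sup [set (\int[leb]_(a in A) (Qfun P Rew gamma V s a * pi s a)%:E)%E
            | pi in PiC A C].

Definition Bmuop (A : set R) (C : R) (P : R.-pker (S * R)%type ~> S)
  (Rew : S -> S -> R -> R) (gamma mu : R) (V : S -> R) (s : S) : \bar R :=
  ereal_sup [set (\int[leb]_(a in A)
                 (Qfun P Rew gamma V s a * pi s a
                  + mu * (pi s a - pi s a ^+ 2))%:E)%E
            | pi in PiC A C].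

End MDP.

(* For a policy density p with 0 <= p <= C, the regularizer mu (p - p^2) equals
   (mu (1 - p)) p, the p-average of a function with values in [mu (1 - C), mu];
   so its integral has absolute value at most mu max(|1 - C|, 1).  Since the
   transition kernel is a probability, |Q_V1 - Q_V2| <= gamma ||V1 - V2||.
   Hence, policy by policy and then after taking suprema, B_mu V1 and B V2 differ
   by at most gamma ||V1 - V2|| + mu max(|1 - C|, 1), and at the two fixed points
   D := ||V*_mu - V*|| satisfies D <= gamma D + mu max(|1 - C|, 1). *)

From mathcomp Require Import all_boot all_order all_algebra.
From mathcomp Require Import all_classical all_reals all_analysis.
From mathcomp Require Import ring lra measurable_realfun.

Set Implicit Arguments.
Unset Strict Implicit.
Unset Printing Implicit Defensive.

Import Order.TTheory GRing.Theory Num.Theory.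
Local Open Scope classical_set_scope.
Local Open Scope ring_scope.

Section probability_integral.
Context d (T : measurableType d) (R : realType) (mu : {measure set T -> \bar R}).
Hypothesis mu_setT : mu [set: T] = 1%E.

Lemma prob_bounded_integrable (f : T -> R) (M : R) :
  measurable_fun [set: T] f -> (forall x, `|f x| <= M) ->
  mu.-integrable [set: T] (EFin \o f).
Proof.
move=> mf fM; apply: measurable_bounded_integrable => //.
  by rewrite mu_setT ltry.
exists M; split; first by rewrite num_real.
by move=> N MN x _; exact: le_trans (fM x) (ltW MN).
Qed.

Lemma prob_Rintegral_cst (c : R) : \int[mu]_(x in [set: T]) c = c.
Proof. by rewrite Rintegral_cst // mu_setT mulr1. Qed.

Lemma prob_normr_Rintegral_le (f : T -> R) (M : R) :
  measurable_fun [set: T] f -> (forall x, `|f x| <= M) ->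
  `|\int[mu]_(x in [set: T]) f x| <= M.
Proof.
move=> mf fM; have intf := prob_bounded_integrable mf fM.
apply: le_trans (le_normr_Rintegral measurableT intf) _.
rewrite -[leRHS]prob_Rintegral_cst; apply: le_Rintegral => //.
- apply: (prob_bounded_integrable (M := M)); first exact: measurableT_comp.
  by move=> x; rewrite normr_id.
- exact: (prob_bounded_integrable (M := `|M|)).
Qed.

End probability_integral.

Lemma measurable_Rintegral_pker d d' (X : measurableType d) (Y : measurableType d')
    (R : realType) (k : R.-pker X ~> Y) (f : X * Y -> R) (M : R) :
  measurable_fun [set: X * Y] f -> (forall z, `|f z| <= M) ->
  measurable_fun [set: X] (fun x => \int[k x]_(y in [set: Y]) f (x, y)).
Proof.
move=> mf fM.
(* Measurability of kernel integrals is only available for nonnegative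
   integrands, hence the shift by [M]. *)
have fM0 z : 0 <= f z + M by have := fM z; rewrite ler_norml; lra.
have shift x : \int[k x]_(y in [set: Y]) f (x, y) =
    fine (\int[k x]_y (f (x, y) + M)%:E) - M.
  have kx1 : k x [set: Y] = 1%E := prob_kernel x.
  rewrite -[fine _]/(\int[k x]_(y in [set: Y]) (f (x, y) + M)).
  rewrite RintegralD //; last 2 first.
  - apply: (prob_bounded_integrable kx1 (M := M)) => //.
    exact: measurableT_comp mf (pair1_measurable x).
  - exact: (prob_bounded_integrable kx1 (M := `|M|)).
  by rewrite prob_Rintegral_cst // addrK.
rewrite (funext shift); apply: measurable_funB => //.
apply: measurableT_comp => //.
apply: (measurable_fun_integral_sfinite_kernel (fun z => (f z + M)%:E)).
- by move=> z; rewrite lee_fin.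
- by apply/measurable_EFinP; exact: measurable_funD.
Qed.

Section action_value.
Context (R : realType) d (S : measurableType d) (P : R.-pker (S * R)%type ~> S)
  (Rew : S -> S -> R -> R) (gamma MR : R).
Hypothesis mRew : measurable_fun [set: S * (S * R)] (fun x => Rew x.1 x.2.1 x.2.2).
Hypothesis RewMR : forall s' s a, `|Rew s' s a| <= MR.
Hypothesis gamma_ge0 : 0 <= gamma.

Let backup (V : S -> R) (z : (S * R) * S) := Rew z.2 z.1.1 z.1.2 + gamma * V z.2.

Let measurable_backup (V : S -> R) : measurable_fun [set: S] V ->
  measurable_fun [set: (S * R) * S] (backup V).
Proof.
move=> mV; apply: measurable_funD; last first.
  by apply: measurable_funM => //; exact: measurableT_comp mV measurable_snd.
pose swap (z : (S * R) * S) := (z.2, z.1).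
have mswap : measurable_fun [set: (S * R) * S] swap.
  by apply/measurable_fun_pairP; split; [exact: measurable_snd|exact: measurable_fst].
exact: measurableT_comp mRew mswap.
Qed.

Let normr_backup_le (V : S -> R) (MV : R) : (forall s, `|V s| <= MV) ->
  forall z, `|backup V z| <= MR + gamma * MV.
Proof.
move=> VM z; apply: le_trans (ler_normD _ _) _; apply: lerD => //.
by rewrite normrM ger0_norm // ler_wpM2l.
Qed.

Let measurable_backup_section (V : S -> R) (s : S) (a : R) :
  measurable_fun [set: S] V ->
  measurable_fun [set: S] (fun s' => backup V ((s, a), s')).
Proof.
by move=> mV; exact: measurableT_comp (measurable_backup mV) (pair1_measurable _).
Qed.

Lemma measurable_Qfun (V : S -> R) (MV : R) (s : S) :
  measurable_fun [set: S] V -> (forall s, `|V s| <= MV) ->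
  measurable_fun [set: R] (Qfun P Rew gamma V s).
Proof.
move=> mV VM.
have mQ := measurable_Rintegral_pker P (measurable_backup mV) (normr_backup_le VM).
have -> : Qfun P Rew gamma V s =
    (fun x => \int[P x]_(y in [set: S]) backup V (x, y)) \o pair s by [].
exact: measurableT_comp mQ (pair1_measurable s).
Qed.

Lemma normr_Qfun_le (V : S -> R) (MV : R) (s : S) (a : R) :
  measurable_fun [set: S] V -> (forall s, `|V s| <= MV) ->
  `|Qfun P Rew gamma V s a| <= MR + gamma * MV.
Proof.
move=> mV VM; apply: (prob_normr_Rintegral_le (prob_kernel _)).
  exact: measurable_backup_section.
by move=> s'; exact: (normr_backup_le VM ((s, a), s')).
Qed.

Lemma Qfun_lipschitz (V1 V2 : S -> R) (M1 M2 D : R) (s : S) (a : R) :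
  measurable_fun [set: S] V1 -> measurable_fun [set: S] V2 ->
  (forall s, `|V1 s| <= M1) -> (forall s, `|V2 s| <= M2) ->
  (forall s, `|V1 s - V2 s| <= D) ->
  `|Qfun P Rew gamma V1 s a - Qfun P Rew gamma V2 s a| <= gamma * D.
Proof.
move=> mV1 mV2 VM1 VM2 VD; have Psa1 : P (s, a) [set: S] = 1%E := prob_kernel _.
rewrite /Qfun -RintegralB //; last 2 first.
- apply: (prob_bounded_integrable Psa1 (measurable_backup_section s a mV1)).
  by move=> s'; exact: (normr_backup_le VM1 ((s, a), s')).
- apply: (prob_bounded_integrable Psa1 (measurable_backup_section s a mV2)).
  by move=> s'; exact: (normr_backup_le VM2 ((s, a), s')).
apply: (prob_normr_Rintegral_le Psa1).
  by apply: measurable_funB; exact: measurable_backup_section.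
move=> s'; rewrite (_ : _ - _ = gamma * (V1 s' - V2 s')); last first.
  by rewrite /backup /=; ring.
by rewrite normrM ger0_norm // ler_wpM2l.
Qed.

End action_value.

Section density_average.
Context (R : realType) (A : set R) (C : R) (p : R -> R).
Local Notation leb := (@lebesgue_measure R).
Hypothesis mA : @measurable _ (measurableTypeR R) A.
Hypothesis hp : density_bounded A C p.

Let mp : measurable_fun A p. Proof. by case: hp. Qed.
Let p_ge0 a : A a -> 0 <= p a. Proof. by case: hp => _ h _ /h/andP[]. Qed.
Let p_leC a : A a -> p a <= C. Proof. by case: hp => _ h _ /h/andP[]. Qed.
Let integral_p : (\int[leb]_(a in A) (p a)%:E = 1)%E. Proof. by case: hp. Qed.

Let integrable_p : leb.-integrable A (EFin \o p).
Proof.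
apply/integrableP; split; first exact/measurable_EFinP.
suff -> : (\int[leb]_(a in A) `|(EFin \o p) a| = \int[leb]_(a in A) (p a)%:E)%E.
  by rewrite integral_p ltry.
by apply: eq_integral => a /set_mem Aa /=; rewrite ger0_norm // p_ge0.
Qed.

Lemma density_integrable (h : R -> R) (M : R) :
  measurable_fun A h -> (forall a, A a -> `|h a| <= M) ->
  leb.-integrable A (EFin \o (fun a => h a * p a)).
Proof.
move=> mh hM; apply: (le_integrable mA _ _ (integrableZl mA M integrable_p)).
  by apply/measurable_EFinP; exact: measurable_funM.
move=> a Aa /=; rewrite lee_fin !normrM ler_wpM2r //.
exact: le_trans (hM a Aa) (ler_norm M).
Qed.

Lemma density_average_bounds (h : R -> R) (lo hi : R) :
  measurable_fun A h -> (forall a, A a -> lo <= h a <= hi) ->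
  lo <= \int[leb]_(a in A) (h a * p a) <= hi.
Proof.
move=> mh hb.
have hM a : A a -> `|h a| <= `|lo| + `|hi|.
  move=> Aa; have /andP[loh hhi] := hb a Aa.
  have := ler_norm hi; have := ler_norm (- lo); rewrite normrN.
  have := normr_ge0 lo; have := normr_ge0 hi.
  by rewrite ler_norml => *; apply/andP; split; lra.
have Rintegral_cst_p c : \int[leb]_(a in A) (c * p a) = c.
  by rewrite RintegralZl // /Rintegral integral_p mulr1.
have int_cst_p c : leb.-integrable A (EFin \o (fun a => c * p a)).
  by apply: (density_integrable (M := `|c|)) => // a _.
have int_hp := density_integrable mh hM.
apply/andP; split.
- rewrite -[X in X <= _]Rintegral_cst_p; apply: le_Rintegral => // a Aa.
  by rewrite ler_wpM2r ?p_ge0 //; case/andP: (hb a Aa).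
- rewrite -[X in _ <= X]Rintegral_cst_p; apply: le_Rintegral => // a Aa.
  by rewrite ler_wpM2r ?p_ge0 //; case/andP: (hb a Aa).
Qed.

Lemma integral_density_EFin (h k : R -> R) (M : R) :
  measurable_fun A h -> (forall a, A a -> `|h a| <= M) ->
  (forall a, A a -> k a = h a * p a) ->
  (\int[leb]_(a in A) (k a)%:E = (\int[leb]_(a in A) k a)%:E)%E.
Proof.
move=> mh hM kE; rewrite /Rintegral fineK //; apply: integrable_fin_num => //.
apply: (eq_integrable mA _ _ _ (density_integrable mh hM)).
by move=> a /set_mem Aa /=; rewrite kE.
Qed.

Lemma regularized_density_average_near (q1 q2 : R -> R) (M1 M2 e mu : R) :
  measurable_fun A q1 -> measurable_fun A q2 ->
  (forall a, A a -> `|q1 a| <= M1) -> (forall a, A a -> `|q2 a| <= M2) ->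
  (forall a, A a -> `|q1 a - q2 a| <= e) -> 0 <= mu ->
  `|\int[leb]_(a in A) (q1 a * p a + mu * (p a - p a ^+ 2))
    - \int[leb]_(a in A) (q2 a * p a)| <= e + mu * Num.max `|1 - C| 1.
Proof.
move=> mq1 mq2 q1M q2M q12e mu0.
have mq12 : measurable_fun A (fun a => q1 a - q2 a) by exact: measurable_funB.
have mreg : measurable_fun A (fun a => mu * (1 - p a)).
  by apply: measurable_funM => //; exact: measurable_funB.
have int_q12 := density_integrable mq12 q12e.
have int_q2 := density_integrable mq2 q2M.
have int_reg : leb.-integrable A (EFin \o (fun a => mu * (1 - p a) * p a)).
  apply: (density_integrable (M := mu * (1 + `|C|))) => // a Aa.
  have := p_ge0 Aa; have := p_leC Aa; have := ler_norm C => *.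
  rewrite normrM ger0_norm // ler_wpM2l // ler_norml; apply/andP; split; lra.
have -> : \int[leb]_(a in A) (q1 a * p a + mu * (p a - p a ^+ 2)) =
    \int[leb]_(a in A) ((q1 a - q2 a) * p a + mu * (1 - p a) * p a)
    + \int[leb]_(a in A) (q2 a * p a).
  rewrite -RintegralD //; last first.
    apply: (eq_integrable mA _ _ _ (integrableD mA int_q12 int_reg)).
    by move=> a _; rewrite /= EFinD.
  by apply: eq_Rintegral => a _; ring.
rewrite addrK RintegralD //.
have /andP[q12_lo q12_hi] :
    - e <= \int[leb]_(a in A) ((q1 a - q2 a) * p a) <= e.
  by apply: density_average_bounds => // a Aa; rewrite -ler_norml; exact: q12e.
have /andP[reg_lo reg_hi] : mu * (1 - C) <=
    \int[leb]_(a in A) (mu * (1 - p a) * p a) <= mu.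
  apply: density_average_bounds => // a Aa.
  have := p_leC Aa; have := mulr_ge0 mu0 (p_ge0 Aa) => *.
  by apply/andP; split; [apply: ler_wpM2l => //; lra | lra].
have K1 : mu <= mu * Num.max `|1 - C| 1 by rewrite ler_peMr // le_max lexx orbT.
have KC : mu * (C - 1) <= mu * Num.max `|1 - C| 1.
  by rewrite ler_wpM2l // le_max -normrN opprB ler_norm.
rewrite ler_norml; apply/andP; split; lra.
Qed.

End density_average.

Lemma ereal_sup_image_le_shift (I : Type) (R : realType) (X : set I)
    (f g : I -> \bar R) (c : R) :
  (forall i, X i -> (f i <= g i + c%:E)%E) ->
  (ereal_sup [set f i | i in X] <= ereal_sup [set g i | i in X] + c%:E)%E.
Proof.
move=> fg; apply: ge_ereal_sup => _ [i Xi <-].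
by apply: le_trans (fg i Xi) _; apply: leeD => //; apply: ereal_sup_ubound; exists i.
Qed.

Lemma contraction_le_div (T : Type) (R : realType) (f : T -> R) (gamma c : R) :
  gamma < 1 -> (exists M, forall t, f t <= M) ->
  (forall D, (forall t, f t <= D) -> forall t, f t <= gamma * D + c) ->
  forall t, f t <= c / (1 - gamma).
Proof.
move=> gamma_lt1 [M fM] contraction t0.
have range_f0 : range f !=set0 by exists (f t0), t0.
have sup_f : has_sup (range f) by split => //; exists M => _ [t _ <-].
have le_sup t : f t <= sup (range f) by apply: sup_upper_bound => //; exists t.
have : sup (range f) <= gamma * sup (range f) + c.
  by apply: ge_sup => // _ [t _ <-]; exact: contraction.
rewrite ler_pdivlMr ?subr_gt0 // => sup_le; have := le_sup t0; nra.
Qed.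

Section bellman_operators_near.
Context (R : realType) d (S : measurableType d) (A : set R) (C : R)
  (P : R.-pker (S * R)%type ~> S) (Rew : S -> S -> R -> R) (gamma mu MR : R).
Local Notation leb := (@lebesgue_measure R).
Hypothesis mA : @measurable _ (measurableTypeR R) A.
Hypothesis mRew : measurable_fun [set: S * (S * R)] (fun x => Rew x.1 x.2.1 x.2.2).
Hypothesis RewMR : forall s' s a, `|Rew s' s a| <= MR.
Hypothesis gamma_ge0 : 0 <= gamma.
Hypothesis mu_ge0 : 0 <= mu.
Variables (V1 V2 : S -> R) (M1 M2 D : R).
Hypotheses (mV1 : measurable_fun [set: S] V1) (mV2 : measurable_fun [set: S] V2).
Hypotheses (V1M : forall s, `|V1 s| <= M1) (V2M : forall s, `|V2 s| <= M2).
Hypothesis V12D : forall s, `|V1 s - V2 s| <= D.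

Let Q1 := Qfun P Rew gamma V1.
Let Q2 := Qfun P Rew gamma V2.
Let err := gamma * D + mu * Num.max `|1 - C| 1.

Let policy_values_near pi s : PiC A C pi ->
  let F := (\int[leb]_(a in A) (Q1 s a * pi s a + mu * (pi s a - pi s a ^+ 2))%:E)%E in
  let G := (\int[leb]_(a in A) (Q2 s a * pi s a)%:E)%E in
  (F <= G + err%:E)%E /\ (G <= F + err%:E)%E.
Proof.
move=> /(_ s) hp F G; have [mp pC _] := hp.
have mQ1 : measurable_fun A (Q1 s).
  apply: measurable_funS measurableT (@subsetT _ A) _.
  exact: (measurable_Qfun P mRew RewMR gamma_ge0 s mV1 V1M).
have mQ2 : measurable_fun A (Q2 s).
  apply: measurable_funS measurableT (@subsetT _ A) _.
  exact: (measurable_Qfun P mRew RewMR gamma_ge0 s mV2 V2M).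
have Q1M a : `|Q1 s a| <= MR + gamma * M1 by exact: normr_Qfun_le.
have Q2M a : `|Q2 s a| <= MR + gamma * M2 by exact: normr_Qfun_le.
have mreg : measurable_fun A (fun a => Q1 s a + mu * (1 - pi s a)).
  by apply: measurable_funD => //; apply: measurable_funM => //; exact: measurable_funB.
have regM a : A a ->
    `|Q1 s a + mu * (1 - pi s a)| <= MR + gamma * M1 + mu * (1 + `|C|).
  move=> Aa; apply: le_trans (ler_normD _ _) _; apply: lerD => //.
  have /andP[p0 pleC] := pC a Aa; have := ler_norm C => *.
  rewrite normrM ger0_norm // ler_wpM2l // ler_norml; apply/andP; split; lra.
have Q12D a : `|Q1 s a - Q2 s a| <= gamma * D.
  exact: (Qfun_lipschitz P mRew RewMR gamma_ge0 s a mV1 mV2 V1M V2M V12D).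
have near := regularized_density_average_near mA hp mQ1 mQ2
  (fun a _ => Q1M a) (fun a _ => Q2M a) (fun a _ => Q12D a) mu_ge0.
rewrite /F /G (integral_density_EFin mA hp mreg regM); last by move=> a _; ring.
rewrite (integral_density_EFin mA hp mQ2 (fun a _ => Q2M a)) // -!EFinD !lee_fin.
by move: near; rewrite /err ler_norml => /andP[]; split; lra.
Qed.

Lemma Bmuop_Bop_near s :
  (Bmuop A C P Rew gamma mu V1 s <= Bop A C P Rew gamma V2 s + err%:E)%E /\
  (Bop A C P Rew gamma V2 s <= Bmuop A C P Rew gamma mu V1 s + err%:E)%E.
Proof.
split; apply: ereal_sup_image_le_shift => pi piC.
- exact: (policy_values_near s piC).1.
- exact: (policy_values_near s piC).2.
Qed.

End bellman_operators_near.

Theorem propositionS2 (R : realType) (d : measure_display) (S : measurableType d)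
  (A : set R) (P : R.-pker (S * R)%type ~> S) (Rew : S -> S -> R -> R)
  (gamma C mu : R) (Vmu Vstar : S -> R) :
  measurable A ->
  0 <= gamma < 1 ->
  measurable_fun setT (fun x : S * (S * R) => Rew x.1 x.2.1 x.2.2) ->
  (exists M : R, forall s' s a, `|Rew s' s a| <= M) ->
  0 < mu ->
  measurable_fun setT Vmu -> (exists M : R, forall s, `|Vmu s| <= M) ->
  (forall s, Bmuop A C P Rew gamma mu Vmu s = (Vmu s)%:E) ->
  measurable_fun setT Vstar -> (exists M : R, forall s, `|Vstar s| <= M) ->
  (forall s, Bop A C P Rew gamma Vstar s = (Vstar s)%:E) ->
  forall s, `|Vmu s - Vstar s| <= mu * Num.max `|1 - C| 1 / (1 - gamma).
Proof.
move=> mA /andP[gamma_ge0 gamma_lt1] mRew [MR RewMR] mu_gt0 mVmu [M1 VmuM] Vmu_fix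
  mVstar [M2 VstarM] Vstar_fix.
apply: contraction_le_div => //.
  by exists (M1 + M2) => s; apply: le_trans (ler_normB _ _) (lerD _ _).
move=> D VD s.
have [Vmu_le Vstar_le] := Bmuop_Bop_near C P mA mRew RewMR gamma_ge0 (ltW mu_gt0)
  mVmu mVstar VmuM VstarM VD s.
move: Vmu_le Vstar_le; rewrite Vmu_fix Vstar_fix -!EFinD !lee_fin => *.
by rewrite ler_norml; apply/andP; split; lra.
Qed.
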